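(* Let $X$ be a $\delta$-hyperbolic graph, $\mathcal Y$ a collection of $K$-quasiconvex subsets of $X$ which is $M_0$-geometrically separated, and $\hat X$ the cone-off of $X$ with respect to $\mathcal Y$. There exists a constant $C=C(\delta,K,M_0)$, bounded linearly in $M_0$, such that for every $Y\in\mathcal Y$ and all $x,y\in\hat X\setminus\{v_Y\}$, if an $\hat X$-geodesic $\gamma$ from $x$ to $y$ does not pass through $v_Y$, then $\mathsf d^\pi_Y(x,y)\le C$.
   Context: $X$ is a geodesic simplicial graph whose points are vertices, $\delta$-hyperbolic (for all $x,y,z$, $[x,y]\subseteq\mathcal N_\delta([x,z]\cup[z,y])$, $\mathcal N_R$ closed $R$-neighborhood). $Y$ is $K$-quasiconvex if every geodesic between points of $Y$ lies in $\mathcal N_K(Y)$. $\mathcal Y$ is $M_0$-geometrically separated if $\mathrm{diam}(\mathcal N_{2K+2\delta}(Y')\cap Y)\le M_0$ for distinct $Y,Y'\in\mathcal Y$. The cone-off $\hat X$ is obtained from $X$ by adding, for each $Y\in\mathcal Y$, a vertex $v_Y$ joined by an edge to every vertex of $Y$. For $z\in X$, $\pi_Y(z)=\{y\in Y:\mathsf d_X(z,Y)=\mathsf d_X(z,y)\}$; for $U\in\mathcal Y\setminus\{Y\}$, $\pi_Y(v_U):=\pi_Y(U)=\bigcup_{u\in U}\pi_Y(u)$. For $x,y\in\hat X\setminus\{v_Y\}$, $\mathsf d^\pi_Y(x,y)=\mathrm{diam}(\pi_Y(x)\cup\pi_Y(y))$ (diameter in $X$). A quantity depending on constants $c_1,\dots,c_n$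 and $M_0$ is bounded linearly in $M_0$ if it is at most $a(c_1,\dots,c_n)M_0+b(c_1,\dots,c_n)$ in absolute value for some positive functions $a,b$. *)

(* Distances are expressed through the predicate
   [dist_le e x y n] ("d(x,y) <= n"). *)
From mathcomp Require Import all_boot.

Set Implicit Arguments.
Unset Strict Implicit.
Unset Printing Implicit Defensive.

Section Graphs.
Variables (T : Type) (e : T -> T -> Prop).

(* [walk x p]: x, p_1, ..., p_k is an edge path starting at x; its
   length is [size p] and its endpoint is [last x p]. *)
Fixpoint walk (x : T) (p : seq T) : Prop :=
  match p with
  | [::] => True
  | y :: q => e x y /\ walk y q
  end.

Fixpoint mem_list (v : T) (s : seq T) : Prop :=
  match s with
  | [::] => False
  | x :: s' => v = x \/ mem_list v s'
  end.

Definition on_path (v x : T) (p : seq T) : Prop := v = x \/ mem_list v p.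

Definition dist_le (x y : T) (n : nat) : Prop :=
  exists p, walk x p /\ last x p = y /\ size p <= n.

Definition connected : Prop := forall x y, exists n, dist_le x y n.

Definition geodesic (x : T) (p : seq T) (y : T) : Prop :=
  walk x p /\ last x p = y /\
  forall q, walk x q -> last x q = y -> size p <= size q.

Definition nbhd (S : T -> Prop) (R : nat) (v : T) : Prop :=
  exists s, S s /\ dist_le v s R.

Definition diam_le (S : T -> Prop) (C : nat) : Prop :=
  forall a b, S a -> S b -> dist_le a b C.

Definition hyperbolic (delta : nat) : Prop :=
  forall x y z pxy pxz pzy,
    geodesic x pxy y -> geodesic x pxz z -> geodesic z pzy y ->
    forall v, on_path v x pxy ->
      nbhd (fun w => on_path w x pxz \/ on_path w z pzy) delta v.

Definition quasiconvex (K : nat) (Y : T -> Prop) : Prop :=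
  forall x y p, Y x -> Y y -> geodesic x p y ->
    forall v, on_path v x p -> nbhd Y K v.

Definition proj (Y : T -> Prop) (z y : T) : Prop :=
  Y y /\ forall y', Y y' -> forall n, dist_le z y' n -> dist_le z y n.

Definition geometrically_separated (delta K M0 : nat)
    (Ycol : (T -> Prop) -> Prop) : Prop :=
  forall Y Y', Ycol Y -> Ycol Y' -> Y <> Y' ->
    diam_le (fun v => Y v /\ nbhd Y' (2 * K + 2 * delta) v) M0.

End Graphs.

Section ConeOff.
Variables (V : Type) (adj : V -> V -> Prop) (Ycol : (V -> Prop) -> Prop).

Definition coll := {Y : V -> Prop | Ycol Y}.

(* vertices of hat X: vertices of X plus one cone vertex v_Y per Y *)
Definition cone_vertex := (V + coll)%type.

Definition cone_adj (a b : cone_vertex) : Prop :=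
  match a, b with
  | inl u, inl v => adj u v
  | inl u, inr Y => sval Y u
  | inr Y, inl u => sval Y u
  | inr _, inr _ => False
  end.

Definition proj_hat (Y : V -> Prop) (x : cone_vertex) : V -> Prop :=
  match x with
  | inl z => proj adj Y z
  | inr U => fun y => exists u, sval U u /\ proj adj Y u y
  end.

Definition dpi_le (Y : V -> Prop) (x y : cone_vertex) (C : nat) : Prop :=
  diam_le adj (fun w => proj_hat Y x w \/ proj_hat Y y w) C.

End ConeOff.

From mathcomp Require Import all_boot zify.
From Stdlib Require Import Classical ProofIrrelevance.
From Stdlib Require ClassicalEpsilon Wf_nat.

(* Walk along the cone-off geodesic x = gamma_0, ..., gamma_n = y and replace each cone
   vertex v_U by a point of U; call these points of X the shadows xi_i.  Consecutive
   shadows are equal, adjacent, or lie in a common U <> Y, so by hyperbolicity,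
   quasiconvexity and geometric separation their projections to Y are M0 + O(dl + K)
   apart.  Let gamma_w be the vertex closest to v_Y.  As gamma is a geodesic avoiding v_Y,
   |i - w| is at most twice the distance from gamma_i to v_Y, so far from w the
   X-geodesics joining consecutive shadows stay away from Y, at a distance growing
   linearly in |i - w|.  Cutting such a chain of geodesics into blocks of 2 dl + 1 pieces
   shows that a geodesic joining its ends stays 2 dl + K away from Y, and then the
   projections of its ends are O(dl + K) apart.  Only the O(dl^2 + K) steps near w
   contribute M0 each. *)

Set Implicit Arguments.
Unset Strict Implicit.
Unset Printing Implicit Defensive.

Lemma ex_least_nat (P : nat -> Prop) :
  (exists n, P n) -> exists n, P n /\ forall m, P m -> n <= m.
Proof.
move=> HP.
have [n [[Pn Hmin] _]] :=
  Wf_nat.dec_inh_nat_subset_has_unique_least_element P (fun m => classic (P m)) HP.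
by exists n; split=> // m /Hmin /leP.
Qed.

Section PathMetric.
Variables (T : Type) (e : T -> T -> Prop).

Definition dist_ge (a b : T) (n : nat) : Prop := forall m, dist_le e a b m -> n <= m.

Lemma walk_cat a s t : walk e a (s ++ t) <-> walk e a s /\ walk e (last a s) t.
Proof. by elim: s a => [|b s IH] a /=; [tauto | rewrite IH; tauto]. Qed.

Lemma dist_le_refl a : dist_le e a a 0.
Proof. by exists [::]. Qed.

Lemma dist_le_weaken a b n m : dist_le e a b n -> n <= m -> dist_le e a b m.
Proof. by move=> [s [Hw [Hl Hs]]] Hnm; exists s; split=> //; split=> //; lia. Qed.

Lemma dist_le_trans a b c n m :
  dist_le e a b n -> dist_le e b c m -> dist_le e a c (n + m).
Proof.
move=> [s [Hs [Hsl Hsn]]] [t [Ht [Htl Htm]]].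
exists (s ++ t); split; first by apply/walk_cat; rewrite Hsl.
by rewrite last_cat Hsl size_cat; split=> //; lia.
Qed.

Lemma dist_le_edge a b : e a b -> dist_le e a b 1.
Proof. by exists [:: b]. Qed.

Lemma walk_nth_dist a s k : walk e a s -> k <= size s ->
  dist_le e a (nth a (a :: s) k) k /\
  dist_le e (nth a (a :: s) k) (last a s) (size s - k).
Proof.
elim: s a k => [|b s IH] a k /=.
  by move=> _; rewrite leqn0 => /eqP ->; split; apply: dist_le_refl.
move=> [Hab Hw]; case: k => [|k] Hk /=.
  by split; [apply: dist_le_refl | exists (b :: s)].
have [Hbm Hml] := IH b k Hw Hk.
rewrite (set_nth_default b a) //; split; last by rewrite subSS.
exact: dist_le_trans (dist_le_edge Hab) Hbm.
Qed.

Lemma on_path_nth (a : T) s k : k <= size s -> on_path (nth a (a :: s) k) a s.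
Proof.
elim: s a k => [|b s IH] a [|k] //= Hk; try by left.
by right; rewrite (set_nth_default b a) //; apply: IH.
Qed.

Lemma on_path_index (w a : T) s :
  on_path w a s -> exists2 k, k <= size s & w = nth a (a :: s) k.
Proof.
elim: s a => [|b s IH] a [->|Hw]; try by exists 0.
have [k Hk ->] := IH b Hw.
by exists k.+1; rewrite //= (set_nth_default b a).
Qed.

Lemma walk_nth_edge a s i : walk e a s -> i < size s ->
  e (nth a (a :: s) i) (nth a (a :: s) i.+1).
Proof.
elim: s a i => [|b s IH] a i //= [Hab Hw].
case: i => [|i] //= Hi.
by rewrite !(set_nth_default b a) //; [apply: IH | apply: ltnW].
Qed.

Lemma geodesic_exists : connected e -> forall a b, exists s, geodesic e a s b.
Proof.
move=> Hconn a b.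
have [n [[s [Hw [Hl Hs]]] Hmin]] := ex_least_nat (Hconn a b).
exists s; split=> //; split=> // t Ht Htl.
have := Hmin (size t) (ex_intro _ t (conj Ht (conj Htl (leqnn _)))); lia.
Qed.

Lemma geodesic_dist_le a s b : geodesic e a s b -> dist_le e a b (size s).
Proof. by move=> [Hw [Hl _]]; exists s. Qed.

Lemma geodesic_dist_ge a s b : geodesic e a s b -> dist_ge a b (size s).
Proof. by move=> [_ [_ Hmin]] m [t [Ht [Htl Htm]]]; apply: leq_trans (Hmin t Ht Htl) Htm. Qed.

Lemma geodesic_nth a s b k : geodesic e a s b -> k <= size s ->
  let m := nth a (a :: s) k in
  [/\ on_path m a s, dist_le e a m k, dist_le e m b (size s - k),
      dist_ge a m k & dist_ge m b (size s - k)].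
Proof.
move=> Hg Hk m.
have [Ham Hmb] := walk_nth_dist (proj1 Hg) Hk.
rewrite (proj1 (proj2 Hg)) in Hmb.
split=> //; first exact: on_path_nth.
  by move=> n Hn; have := geodesic_dist_ge Hg (dist_le_trans Hn Hmb); lia.
by move=> n Hn; have := geodesic_dist_ge Hg (dist_le_trans Ham Hn); lia.
Qed.

Lemma geodesic_short_endpoints a s b w :
  geodesic e a s b -> dist_le e a b 1 -> on_path w a s -> w = a \/ w = b.
Proof.
move=> Hg /(geodesic_dist_ge Hg) Hs /on_path_index [k Hk ->].
case: k Hk => [|k] Hk; first by left.
right; rewrite -(proj1 (proj2 Hg)).
by case: s {Hg} Hs Hk => [|c [|d s]] //=; case: k.
Qed.

Lemma diam_le_weaken (S : T -> Prop) n m : diam_le e S n -> n <= m -> diam_le e S m.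
Proof. by move=> HS Hnm a b Sa Sb; apply: dist_le_weaken (HS a b Sa Sb) Hnm. Qed.

Lemma diam_le_union_trans (A B C : T -> Prop) n m :
  diam_le e (fun w => A w \/ B w) n -> diam_le e (fun w => B w \/ C w) m ->
  (exists w, B w) -> diam_le e (fun w => A w \/ C w) (n + m).
Proof.
move=> HAB HBC [w Bw] a b [Aa|Ca] [Ab|Cb].
- by apply: dist_le_weaken (HAB a b (or_introl Aa) (or_introl Ab)) _; lia.
- exact: dist_le_trans (HAB a w (or_introl Aa) (or_intror Bw))
                        (HBC w b (or_introl Bw) (or_intror Cb)).
- apply: dist_le_weaken (dist_le_trans (HBC a w (or_intror Ca) (or_introl Bw))
                                      (HAB w b (or_intror Bw) (or_introl Ab))) _; lia.
- by apply: dist_le_weaken (HBC a b (or_intror Ca) (or_intror Cb)) _; lia.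
Qed.

Hypothesis e_sym : forall a b, e a b -> e b a.

Lemma dist_le_sym a b n : dist_le e a b n -> dist_le e b a n.
Proof.
move=> [s [Hw [<- Hs]]].
elim: s a n Hw Hs => [|c s IH] a n /=.
  by move=> _ _; apply: dist_le_weaken (dist_le_refl a) _.
move=> [Hac Hw] Hs.
apply: dist_le_weaken (dist_le_trans (IH c (size s) Hw (leqnn _)) (dist_le_edge (e_sym Hac))) _.
by rewrite addn1.
Qed.

Lemma dist_ge_sym a b n : dist_ge a b n -> dist_ge b a n.
Proof. by move=> H m /dist_le_sym /H. Qed.

Lemma geodesic_index_gap a s b z i j k1 k2 : geodesic e a s b -> i <= j -> j <= size s ->
  dist_le e (nth a (a :: s) i) z k1 -> dist_le e (nth a (a :: s) j) z k2 -> j - i <= k1 + k2.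
Proof.
move=> Hg Hij Hj Hiz Hjz.
have [_ Hai _ _ _] := geodesic_nth Hg (leq_trans Hij Hj).
have [_ _ Hjb _ _] := geodesic_nth Hg Hj.
have := geodesic_dist_ge Hg
  (dist_le_trans (dist_le_trans (dist_le_trans Hai Hiz) (dist_le_sym Hjz)) Hjb).
lia.
Qed.

End PathMetric.

Section Hyperbolic.
Variables (T : Type) (e : T -> T -> Prop) (dl : nat).
Hypothesis conn : connected e.
Hypothesis hyp : hyperbolic e dl.

Lemma geodesic_near_chain N (v : nat -> T) Q c : 0 < N ->
  geodesic e (v 0) Q (v N) -> on_path c (v 0) Q ->
  exists t s p, [/\ t < N, geodesic e (v t) s (v t.+1), on_path p (v t) s
                  & dist_le e c p (dl * t.+1)].
Proof.
elim: N v Q c => [//|N IH] v Q c _ HQ Hc.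
case: (posnP N) => [N0|Npos].
  subst N; exists 0, Q, c; split=> //.
  exact: dist_le_weaken (dist_le_refl e c) (leq0n _).
have [s0 Hs0] := geodesic_exists conn (v 0) (v 1).
have [Q' HQ'] := geodesic_exists conn (v 1) (v N.+1).
have [w [[Hw|Hw] Hcw]] := hyp HQ Hs0 HQ' Hc.
  by exists 0, s0, w; split=> //; rewrite muln1.
have [t [s [p [Ht Hs Hp Hwp]]]] := IH (fun i => v i.+1) Q' w Npos HQ' Hw.
exists t.+1, s, p; split=> //.
by apply: dist_le_weaken (dist_le_trans Hcw Hwp) _; rewrite (mulnS _ t.+1).
Qed.

(* Splitting the chain into blocks of L pieces, the distance to the t-th piece grows by
   only dl per block rather than per piece. *)
Lemma geodesic_near_chain_blocks L N (v : nat -> T) Q c : 0 < L -> 0 < N ->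
  geodesic e (v 0) Q (v N) -> on_path c (v 0) Q ->
  exists t j s p, [/\ t < N, j * L <= t, geodesic e (v t) s (v t.+1), on_path p (v t) s
                    & dist_le e c p (dl * (j + L + 1))].
Proof.
move=> L0; elim/ltn_ind: N v Q c => N IH v Q c N0 HQ Hc.
case: (leqP N L) => [NL|LN].
  have [t [s [p [Ht Hs Hp Hcp]]]] := geodesic_near_chain N0 HQ Hc.
  exists t, 0, s, p; split=> //.
  by apply: dist_le_weaken Hcp _; apply: leq_mul => //; lia.
have [G HG] := geodesic_exists conn (v 0) (v L).
have [Q' HQ'] := geodesic_exists conn (v L) (v N).
have [w [[Hw|Hw] Hcw]] := hyp HQ HG HQ' Hc.
  have [t [s [p [Ht Hs Hp Hwp]]]] := geodesic_near_chain L0 HG Hw.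
  exists t, 0, s, p; split=> //; first lia.
  apply: dist_le_weaken (dist_le_trans Hcw Hwp) _.
  by rewrite -mulnS; apply: leq_mul => //; lia.
have HQ'' : geodesic e (v (0 + L)) Q' (v (N - L + L)) by rewrite add0n subnK // ltnW.
have [t [j [s [p [Ht Hj Hs Hp Hwp]]]]] :=
  IH (N - L) ltac:(lia) (fun i => v (i + L)) Q' w ltac:(lia) HQ'' Hw.
exists (t + L), j.+1, s, p; split=> //; try lia.
apply: dist_le_weaken (dist_le_trans Hcw Hwp) _.
by rewrite -mulnS; apply: leq_mul => //; lia.
Qed.

End Hyperbolic.

Definition proj_gap (dl K : nat) := 2 * (4 * dl + K) + 2.

Definition far_gap (dl K : nat) := 4 * dl * dl + 8 * dl + 2 * K + 1.

Section Projection.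
Variables (T : Type) (e : T -> T -> Prop) (dl K : nat) (Y : T -> Prop).
Hypothesis e_sym : forall a b, e a b -> e b a.
Hypothesis conn : connected e.
Hypothesis hyp : hyperbolic e dl.
Hypothesis qcY : quasiconvex e K Y.

Lemma proj_exists : (exists y0, Y y0) -> forall z, exists p, proj e Y z p.
Proof.
move=> [y0 Yy0] z.
have [n0 Hn0] := conn z y0.
have [n [[p [Yp Hp]] Hmin]] :=
  ex_least_nat (ex_intro (fun n => exists p, Y p /\ dist_le e z p n) n0
                         (ex_intro _ y0 (conj Yy0 Hn0))).
exists p; split=> // y Yy m Hm.
by apply: dist_le_weaken Hp _; apply: Hmin; exists y.
Qed.

(* [dist_ge e a p (k + l)] says that w lies on a geodesic from a to its projection p. *)
Lemma proj_dist_split a p w y k l R : proj e Y a p -> Y y ->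
  dist_le e a w k -> dist_le e w p l -> dist_ge e a p (k + l) ->
  dist_le e w y R -> dist_le e w p R.
Proof.
move=> [_ Hp] Yy Haw Hwp Hap Hwy.
have := Hap _ (Hp y Yy _ (dist_le_trans Haw Hwy)).
by rewrite leq_add2l; apply: dist_le_weaken Hwp.
Qed.

Lemma geodesic_passes_near a b p q tau Q k :
  proj e Y a p -> proj e Y b q -> geodesic e p tau q ->
  4 * dl + K < k -> 4 * dl + K < size tau - k -> geodesic e a Q b ->
  exists r, on_path r a Q /\ dist_le e (nth p (p :: tau) k) r (2 * dl).
Proof.
move=> Hp Hq Htau Hk Hsk HQ.
have [Hm _ _ Gpm Gmq] := geodesic_nth Htau (k := k) ltac:(lia).
set m := nth p (p :: tau) k in Hm Gpm Gmq *.
have [ym [Yym Hmym]] := qcY (proj1 Hp) (proj1 Hq) Htau Hm.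
have [G1 HG1] := geodesic_exists conn p a.
have [G2 HG2] := geodesic_exists conn a q.
have [G3 HG3] := geodesic_exists conn b q.
have [w [[Hw|Hw] Hmw]] := hyp Htau HG1 HG2 Hm.
  have [l Hl Ew] := on_path_index Hw.
  have [_ Hpw Hwa _ _] := geodesic_nth HG1 Hl; rewrite -Ew in Hpw Hwa.
  have Hap : dist_ge e a p (size G1 - l + l).
    by rewrite subnK //; apply: dist_ge_sym (geodesic_dist_ge HG1).
  have Hwp := proj_dist_split Hp Yym (dist_le_sym e_sym Hwa) (dist_le_sym e_sym Hpw) Hap
                (dist_le_trans (dist_le_sym e_sym Hmw) Hmym).
  have := Gpm _ (dist_le_trans (dist_le_sym e_sym Hwp) (dist_le_sym e_sym Hmw)); lia.
have [w' [[Hw'|Hw'] Hww']] := hyp HG2 HQ HG3 Hw.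
  by exists w'; split=> //; apply: dist_le_weaken (dist_le_trans Hmw Hww') _; lia.
have [l Hl Ew'] := on_path_index Hw'.
have [_ Hbw Hwq _ _] := geodesic_nth HG3 Hl; rewrite -Ew' in Hbw Hwq.
have Hbq : dist_ge e b q (l + (size G3 - l)) by rewrite subnKC //; apply: geodesic_dist_ge HG3.
have Hw'q := proj_dist_split Hq Yym Hbw Hwq Hbq
  (dist_le_trans (dist_le_sym e_sym Hww') (dist_le_trans (dist_le_sym e_sym Hmw) Hmym)).
have := Gmq _ (dist_le_trans (dist_le_trans Hmw Hww') Hw'q); lia.
Qed.

Lemma proj_close_far_geodesic a b Q p q : geodesic e a Q b ->
  (forall r y, on_path r a Q -> Y y -> ~ dist_le e r y (2 * dl + K)) ->
  proj e Y a p -> proj e Y b q -> dist_le e p q (proj_gap dl K).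
Proof.
move=> HQ Hfar Hp Hq.
have [tau Htau] := geodesic_exists conn p q.
case: (leqP (size tau) (proj_gap dl K)) => Hsize.
  exact: dist_le_weaken (geodesic_dist_le Htau) Hsize.
rewrite /proj_gap in Hsize.
have [Hm _ _ _ _] := geodesic_nth Htau (k := (4 * dl + K).+1) ltac:(lia).
have [r [Hr Hmr]] := geodesic_passes_near Hp Hq Htau (k := (4 * dl + K).+1) (ltnSn _) ltac:(lia) HQ.
have [ym [Yym Hmym]] := qcY (proj1 Hp) (proj1 Hq) Htau Hm.
case: (Hfar r ym Hr Yym).
by apply: dist_le_weaken (dist_le_trans (dist_le_sym e_sym Hmr) Hmym) _; rewrite addnC.
Qed.

Lemma proj_close_of_near a b y p q R : Y y -> dist_le e a y R -> dist_le e a b 1 ->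
  proj e Y a p -> proj e Y b q -> dist_le e p q (2 * R + 2).
Proof.
move=> Yy Hay Hab [_ Hp] [_ Hq].
have Hbq := Hq y Yy _ (dist_le_trans (dist_le_sym e_sym Hab) Hay).
apply: dist_le_weaken (dist_le_trans (dist_le_trans (dist_le_sym e_sym (Hp y Yy _ Hay)) Hab) Hbq) _.
lia.
Qed.

Lemma proj_close_adjacent a b p q : dist_le e a b 1 ->
  proj e Y a p -> proj e Y b q -> dist_le e p q (proj_gap dl K).
Proof.
move=> Hab Hp Hq.
have [Q HQ] := geodesic_exists conn a b.
case: (classic (exists r y, [/\ on_path r a Q, Y y & dist_le e r y (2 * dl + K)]))
  => [[r [y [Hr Yy Hry]]]|Hfar]; last first.
  by apply: proj_close_far_geodesic HQ _ Hp Hq => r y Hr Yy Hry; apply: Hfar; exists r, y.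
have gap : 2 * (2 * dl + K) + 2 <= proj_gap dl K by rewrite /proj_gap; lia.
case: (geodesic_short_endpoints HQ Hab Hr) => Er; subst r.
  exact: dist_le_weaken (proj_close_of_near Yy Hry Hab Hp Hq) gap.
apply/(dist_le_sym e_sym)/(dist_le_weaken _ gap).
exact: proj_close_of_near Yy Hry (dist_le_sym e_sym Hab) Hq Hp.
Qed.

(* Points of [p, q] far from its ends are K-close to points of Y in the
   (2 K + 2 dl)-neighbourhood of U, a set of diameter at most M0. *)
Lemma proj_close_separated (U : T -> Prop) M0 a b p q : quasiconvex e K U ->
  diam_le e (fun v => Y v /\ nbhd e U (2 * K + 2 * dl) v) M0 ->
  U a -> U b -> proj e Y a p -> proj e Y b q -> dist_le e p q (M0 + 2 * K + proj_gap dl K).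
Proof.
move=> qcU Hsep Ua Ub Hp Hq.
have [tau Htau] := geodesic_exists conn p q.
case: (leqP (size tau) (M0 + 2 * K + proj_gap dl K)) => Hsize.
  exact: dist_le_weaken (geodesic_dist_le Htau) Hsize.
rewrite /proj_gap in Hsize.
have [Q HQ] := geodesic_exists conn a b.
have near_U k : 4 * dl + K < k -> 4 * dl + K < size tau - k ->
    exists2 y, Y y /\ nbhd e U (2 * K + 2 * dl) y & dist_le e (nth p (p :: tau) k) y K.
  move=> Hk Hsk.
  have [Hm _ _ _ _] := geodesic_nth Htau (k := k) ltac:(lia).
  have [r [Hr Hmr]] := geodesic_passes_near Hp Hq Htau Hk Hsk HQ.
  have [y [Yy Hmy]] := qcY (proj1 Hp) (proj1 Hq) Htau Hm.
  have [u [Uu Hru]] := qcU _ _ _ Ua Ub HQ _ Hr.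
  exists y => //; split=> //; exists u; split=> //.
  apply: dist_le_weaken (dist_le_trans (dist_le_trans (dist_le_sym e_sym Hmy) Hmr) Hru) _; lia.
set k1 := (4 * dl + K).+1; set k2 := size tau - k1.
have [y1 Y1 Hy1] := near_U k1 (ltnSn _) ltac:(lia).
have [y2 Y2 Hy2] := near_U k2 ltac:(lia) ltac:(lia).
have [_ Hpm1 _ _ _] := geodesic_nth Htau (k := k1) ltac:(lia).
have [_ _ _ Gpm2 _] := geodesic_nth Htau (k := k2) ltac:(lia).
have := Gpm2 _ (dist_le_trans (dist_le_trans (dist_le_trans Hpm1 Hy1) (Hsep _ _ Y1 Y2))
                              (dist_le_sym e_sym Hy2)).
lia.
Qed.

Lemma chain_far_geodesic (v : nat -> T) N Q :
  (forall t s p r y, t < N -> geodesic e (v t) s (v t.+1) -> on_path p (v t) s ->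
     Y y -> dist_le e p y r -> far_gap dl K + t <= 2 * r) ->
  0 < N -> geodesic e (v 0) Q (v N) ->
  forall r y, on_path r (v 0) Q -> Y y -> ~ dist_le e r y (2 * dl + K).
Proof.
(* With blocks of 2 dl + 1 pieces the distance to the t-th piece grows at rate less than
   1/2, while the distance from Y grows at rate 1/2; far_gap absorbs the constants. *)
move=> Hside N0 HQ r y Hr Yy Hry.
have [t [j [s [p [Ht Hj Hs Hp Hrp]]]]] :=
  geodesic_near_chain_blocks conn hyp (L := 2 * dl + 1) (ltac:(lia)) N0 HQ Hr.
have := Hside t s p _ y Ht Hs Hp Yy (dist_le_trans (dist_le_sym e_sym Hrp) Hry).
rewrite /far_gap; nia.
Qed.

Lemma proj_close_far_chain (v : nat -> T) N p q :
  (forall t s p r y, t < N -> geodesic e (v t) s (v t.+1) -> on_path p (v t) s ->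
     Y y -> dist_le e p y r -> far_gap dl K + t <= 2 * r) ->
  proj e Y (v 0) p -> proj e Y (v N) q -> dist_le e p q (proj_gap dl K).
Proof.
move=> Hside Hp Hq.
case: (posnP N) => [N0|Npos].
  subst N; exact: proj_close_adjacent (dist_le_weaken (dist_le_refl e _) (leq0n 1)) Hp Hq.
have [Q HQ] := geodesic_exists conn (v 0) (v N).
exact: proj_close_far_geodesic HQ (chain_far_geodesic Hside Npos HQ) Hp Hq.
Qed.

End Projection.

(* far_gap, plus the 2 (K + 2) lost in passing from X-distances to Y to cone-off
   distances to v_Y. *)
Definition window (dl K : nat) := far_gap dl K + 2 * K + 4.

Section ConeOff.
Variables (V : Type) (adj : V -> V -> Prop) (dl K M0 : nat) (Ycol : (V -> Prop) -> Prop).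
Hypothesis adj_sym : forall u v, adj u v -> adj v u.
Hypothesis conn : connected adj.
Hypothesis hyp : hyperbolic adj dl.
Hypothesis qc : forall U, Ycol U -> quasiconvex adj K U.
Hypothesis sep : geometrically_separated adj dl K M0 Ycol.
Variable Y : coll Ycol.

Local Notation H := (cone_adj adj (Ycol := Ycol)).
Local Notation apex := (inr Y : cone_vertex Ycol).
Local Notation pt := (@inl V (coll Ycol)).
Local Notation link_bound := (M0 + (2 * K + proj_gap dl K)).

Definition shadow (c : cone_vertex Ycol) (z : V) : Prop :=
  match c with inl u => u = z | inr U => sval U z end.

Definition linked (a b : V) : Prop :=
  a = b \/ adj a b \/ exists U : coll Ycol, sval U <> sval Y /\ sval U a /\ sval U b.

Lemma cone_adj_sym c c' : H c c' -> H c' c.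
Proof. by case: c c' => [u|U] [u'|U'] //=; apply: adj_sym. Qed.

Lemma apex_neq (U : coll Ycol) : inr U <> apex -> sval U <> sval Y.
Proof.
move=> HU EU; apply: HU; congr inr.
case: U EU => U HU; case: Y => Y' HY /= EU; subst U.
by rewrite (proof_irrelevance _ HU HY).
Qed.

Lemma lift_dist u v n : dist_le adj u v n -> dist_le H (inl u) (inl v) n.
Proof.
move=> [s [Hw [Hl Hs]]]; exists (map inl s).
rewrite last_map Hl size_map; split=> //.
by elim: s u Hw {Hl Hs} => [|w s IH] u //= [Huw Hw]; split=> //; apply: IH.
Qed.

Lemma proj_hat_shadow c w :
  proj_hat adj (sval Y) c w -> exists2 z, shadow c z & proj adj (sval Y) z w.
Proof. by case: c => [u Hw|U [u [Uu Hw]]]; exists u. Qed.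

Lemma proj_hat_in (c : cone_vertex Ycol) w : proj_hat adj (sval Y) c w -> sval Y w.
Proof. by case/proj_hat_shadow=> z _ []. Qed.

Lemma linked_sym a b : linked a b -> linked b a.
Proof.
move=> [->|[Hab|[U [HU [Ua Ub]]]]]; first by left.
  by right; left; apply: adj_sym.
by right; right; exists U.
Qed.

Lemma proj_linked_close a b p q : linked a b ->
  proj adj (sval Y) a p -> proj adj (sval Y) b q -> dist_le adj p q link_bound.
Proof.
have qcY := qc (proj2_sig Y).
move=> [<-|[Hab|[U [HUY [Ua Ub]]]]] Hp Hq.
- have Haa := dist_le_weaken (dist_le_refl adj a) (leq0n 1).
  by apply: dist_le_weaken (proj_close_adjacent adj_sym conn hyp qcY Haa Hp Hq) _; lia.
- have Hab1 := dist_le_edge Hab.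
  by apply: dist_le_weaken (proj_close_adjacent adj_sym conn hyp qcY Hab1 Hp Hq) _; lia.
- have Hsep := sep (proj2_sig Y) (proj2_sig U) (nesym HUY).
  have := proj_close_separated adj_sym conn hyp qcY (qc (proj2_sig U)) Hsep Ua Ub Hp Hq.
  by rewrite addnA.
Qed.

Lemma shadows_linked c a b : c <> apex -> shadow c a -> shadow c b -> linked a b.
Proof.
case: c => [u _ <- <-|U HU Ua Ub]; first by left.
by right; right; exists U; split; first exact: apex_neq.
Qed.

Lemma edge_shadows_linked c c' a b : H c c' -> c <> apex -> c' <> apex ->
  shadow c a -> shadow c' b -> linked a b.
Proof.
case: c c' => [u|U] [u'|U'] //= Huu' HU HU' Ha Hb; subst.
- by right; left.
- by right; right; exists U'; split; first exact: apex_neq.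
- by right; right; exists U; split; first exact: apex_neq.
Qed.

Lemma dpi_le_linked c c' : c <> apex -> c' <> apex ->
  (forall a b, shadow c a -> shadow c' b -> linked a b) ->
  dpi_le adj (sval Y) c c' link_bound.
Proof.
move=> Hc Hc' Hcc' p q Hp Hq.
have from_shadow w : proj_hat adj (sval Y) c w \/ proj_hat adj (sval Y) c' w ->
    exists2 a, shadow c a \/ shadow c' a & proj adj (sval Y) a w.
  by case=> /proj_hat_shadow [a Ha Hw]; exists a => //; [left | right].
have [a Ha Hpa] := from_shadow p Hp.
have [b Hb Hqb] := from_shadow q Hq.
apply: proj_linked_close Hpa Hqb.
case: Ha Hb => Ha [Hb|Hb].
- exact: shadows_linked Hc Ha Hb.
- exact: Hcc'.
- exact/linked_sym/Hcc'.
- exact: shadows_linked Hc' Ha Hb.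
Qed.

Lemma dpi_le_shadow c z : c <> apex -> shadow c z -> dpi_le adj (sval Y) c (pt z) link_bound.
Proof. by move=> Hc Hz; apply: dpi_le_linked => // a b Ha <-; apply: shadows_linked Hc Ha Hz. Qed.

Lemma dpi_le_self z : dpi_le adj (sval Y) (pt z) (pt z) link_bound.
Proof. exact: dpi_le_shadow. Qed.

Lemma dpi_le_edge c c' a b : H c c' -> c <> apex -> c' <> apex ->
  shadow c a -> shadow c' b -> dpi_le adj (sval Y) (pt a) (pt b) link_bound.
Proof.
move=> Hcc' Hc Hc' Ha Hb; apply: dpi_le_linked => // _ _ <- <-.
exact: edge_shadows_linked Hcc' Hc Hc' Ha Hb.
Qed.

Lemma dpi_le_sym (c c' : cone_vertex Ycol) n :
  dpi_le adj (sval Y) c c' n -> dpi_le adj (sval Y) c' c n.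
Proof. by move=> Hcc' p q Hp Hq; apply: Hcc'; rewrite or_comm. Qed.

Lemma dpi_le_of_proj_close z z' :
  (forall p q, proj adj (sval Y) z p -> proj adj (sval Y) z' q ->
     dist_le adj p q (proj_gap dl K)) ->
  dpi_le adj (sval Y) (pt z) (pt z') link_bound.
Proof.
have gap : proj_gap dl K <= link_bound by lia.
move=> Hzz' p q [Hp|Hp] [Hq|Hq].
- exact: proj_linked_close (or_introl erefl) Hp Hq.
- exact: dist_le_weaken (Hzz' p q Hp Hq) gap.
- exact/(dist_le_sym adj_sym)/(dist_le_weaken (Hzz' q p Hq Hp) gap).
- exact: proj_linked_close (or_introl erefl) Hp Hq.
Qed.

Lemma dist_hat_of_shadow c z y r : shadow c z -> sval Y y -> dist_le adj z y r ->
  dist_le H c apex (r + 2).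
Proof.
move=> Hz Yy Hzy.
have Hz_apex : dist_le H (inl z) apex (r + 1).
  exact: dist_le_trans (lift_dist Hzy) (dist_le_edge (e := H) (a := inl y) (b := apex) Yy).
case: c Hz => [u ->|U Uz]; first by apply: dist_le_weaken Hz_apex _; lia.
have HUz := dist_le_edge (e := H) (a := inr U) (b := inl z) Uz.
by apply: dist_le_weaken (dist_le_trans HUz Hz_apex) _; lia.
Qed.

Lemma edge_side_point_near c c' a b s p y r : H c c' -> shadow c a -> shadow c' b ->
  geodesic adj a s b -> on_path p a s -> sval Y y -> dist_le adj p y r ->
  dist_le H c apex (r + K + 2) \/ dist_le H c' apex (r + K + 2).
Proof.
move=> Hcc' Ha Hb Hg Hp Yy Hpy.
suff [z [Hz|Hz] Hzy] : exists2 z, shadow c z \/ shadow c' z & dist_le adj z y (r + K).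
- by left; apply: dist_hat_of_shadow Hz Yy Hzy.
- by right; apply: dist_hat_of_shadow Hz Yy Hzy.
have Hpy' : dist_le adj p y (r + K) by apply: dist_le_weaken Hpy _; lia.
case: c c' Hcc' Ha Hb => [u|U] [u'|U'] //= Huu' Ha Hb; subst.
- by case: (geodesic_short_endpoints Hg (dist_le_edge Huu') Hp) => <-; exists p; auto.
- have [u [Uu Hpu]] := qc (proj2_sig U') Huu' Hb Hg Hp.
  exists u; first by right.
  by apply: dist_le_weaken (dist_le_trans (dist_le_sym adj_sym Hpu) Hpy) _; lia.
- have [u [Uu Hpu]] := qc (proj2_sig U) Ha Huu' Hg Hp.
  exists u; first by left.
  by apply: dist_le_weaken (dist_le_trans (dist_le_sym adj_sym Hpu) Hpy) _; lia.
Qed.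

Section AvoidingGeodesic.
Variables (x y : cone_vertex Ycol) (g : seq (cone_vertex Ycol)).
Hypothesis hg : geodesic H x g y.
Hypothesis hav : ~ on_path apex x g.

Local Notation n := (size g).

Definition gamma i := nth x (x :: g) i.

Lemma gamma_last : gamma n = y.
Proof. by rewrite /gamma -[size g]/((size (x :: g)).-1) nth_last; case: hg => _ []. Qed.

Lemma gamma_edge i : i < n -> H (gamma i) (gamma i.+1).
Proof. exact: walk_nth_edge (proj1 hg). Qed.

Lemma gamma_ne_apex i : i <= n -> gamma i <> apex.
Proof. by move=> Hi E; apply: hav; rewrite -E; apply: on_path_nth. Qed.

Lemma gamma_has_shadow i : 0 < n -> i <= n -> exists z, shadow (gamma i) z.
Proof.
move=> n0 Hi.
have [c Hc] : exists c, H (gamma i) c.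
  case: (ltnP i n) => Hin; first by exists (gamma i.+1); apply: gamma_edge.
  have Ei : i = n.-1.+1 by lia.
  by exists (gamma n.-1); rewrite Ei; apply/cone_adj_sym/gamma_edge; lia.
by case: (gamma i) Hc => [u _|U]; [exists u | case: c => // u Uu; exists u].
Qed.

Section Shadows.
Variable xi : nat -> V.
Hypothesis xi_shadow : forall i, i <= n -> shadow (gamma i) (xi i).
Hypothesis Y_inhabited : exists y0, sval Y y0.

Lemma dpi_le_trans c z c' k l : dpi_le adj (sval Y) c (pt z) k ->
  dpi_le adj (sval Y) (pt z) c' l -> dpi_le adj (sval Y) c c' (k + l).
Proof. by move=> H1 H2; apply: diam_le_union_trans H1 H2 (proj_exists conn Y_inhabited z). Qed.

Lemma dpi_le_step i : i < n -> dpi_le adj (sval Y) (pt (xi i)) (pt (xi i.+1)) link_bound.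
Proof.
move=> Hi; apply: (dpi_le_edge (gamma_edge Hi)); try apply: gamma_ne_apex; try apply: xi_shadow; lia.
Qed.

Lemma dpi_le_run a d : a + d <= n ->
  dpi_le adj (sval Y) (pt (xi a)) (pt (xi (a + d))) (d.+1 * link_bound).
Proof.
elim: d => [|d IH] Had; first by rewrite addn0 mul1n; apply: dpi_le_self.
rewrite addnS mulSn [link_bound + _]addnC.
by apply: dpi_le_trans (IH _) (dpi_le_step _); lia.
Qed.

Lemma closest_index : exists w k0, [/\ w <= n, dist_le H (gamma w) apex k0 &
  forall i k, i <= n -> dist_le H (gamma i) apex k -> k0 <= k].
Proof.
have [y0 Yy0] := Y_inhabited.
have [d Hd] := conn (xi 0) y0.
have [k0 [[w Hw Hk0] Hmin]] :=
  ex_least_nat (ex_intro (fun k => exists2 i, i <= n & dist_le H (gamma i) apex k) _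
    (ex_intro2 _ _ 0 (leq0n n) (dist_hat_of_shadow (xi_shadow (leq0n n)) Yy0 Hd))).
by exists w, k0; split=> // i k Hi Hk; apply: Hmin; exists i.
Qed.

Section Closest.
Variables w k0 : nat.
Hypothesis w_le : w <= n.
Hypothesis w_dist : dist_le H (gamma w) apex k0.
Hypothesis w_min : forall i k, i <= n -> dist_le H (gamma i) apex k -> k0 <= k.

(* |i - w| <= d(gamma_i, v_Y) + d(gamma_w, v_Y) <= 2 d(gamma_i, v_Y). *)
Lemma index_near_apex i k : i <= n -> dist_le H (gamma i) apex k ->
  i - w <= 2 * k /\ w - i <= 2 * k.
Proof.
move=> Hi Hk; have := w_min Hi Hk.
case: (leqP i w) => Hiw.
  by have := geodesic_index_gap cone_adj_sym hg Hiw w_le Hk w_dist; lia.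
by have := geodesic_index_gap cone_adj_sym hg (ltnW Hiw) Hi w_dist Hk; lia.
Qed.

Lemma side_point_far j j' s p y0 r : j <= n -> j' <= n -> (j' = j.+1 \/ j = j'.+1) ->
  geodesic adj (xi j) s (xi j') -> on_path p (xi j) s -> sval Y y0 -> dist_le adj p y0 r ->
  (j - w <= 2 * (r + K + 2) /\ w - j <= 2 * (r + K + 2)) \/
  (j' - w <= 2 * (r + K + 2) /\ w - j' <= 2 * (r + K + 2)).
Proof.
move=> Hj Hj' Hjj' Hg Hp Yy Hpy.
have Hedge : H (gamma j) (gamma j').
  by case: Hjj' => E; subst; [apply: gamma_edge | apply/cone_adj_sym/gamma_edge].
case: (edge_side_point_near Hedge (xi_shadow Hj) (xi_shadow Hj') Hg Hp Yy Hpy) => Hnear.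
  by left; apply: index_near_apex Hj Hnear.
by right; apply: index_near_apex Hj' Hnear.
Qed.

Lemma dpi_le_before_window :
  dpi_le adj (sval Y) (pt (xi 0)) (pt (xi (w - window dl K))) link_bound.
Proof.
set s := window dl K.
apply: dpi_le_of_proj_close => p q Hp Hq.
have Hfar := proj_close_far_chain adj_sym conn hyp (qc (proj2_sig Y))
  (v := fun t => xi (w - s - t)) (N := w - s).
rewrite /= subn0 subnn in Hfar.
apply/(dist_le_sym adj_sym)/(Hfar _ _ _ Hq Hp) => t sg p' r y0 Ht Hg Hp' Yy Hd.
have := side_point_far (j := w - s - t) (j' := w - s - t.+1) _ _ _ Hg Hp' Yy Hd.
by rewrite /s /window in Ht *; lia.
Qed.

Lemma dpi_le_after_window :
  dpi_le adj (sval Y) (pt (xi (minn (w + window dl K) n))) (pt (xi n)) link_bound.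
Proof.
set s := window dl K.
case: (leqP (w + s) n) => Hsn; last exact: dpi_le_self.
apply: dpi_le_of_proj_close => p q Hp Hq.
have Hfar := proj_close_far_chain adj_sym conn hyp (qc (proj2_sig Y))
  (v := fun t => xi (w + s + t)) (N := n - (w + s)).
rewrite /= addn0 subnKC // in Hfar.
apply: (Hfar _ _ _ Hp Hq) => t sg p' r y0 Ht Hg Hp' Yy Hd.
have := side_point_far (j := w + s + t) (j' := w + s + t.+1) _ _ _ Hg Hp' Yy Hd.
by rewrite /s /window in Ht Hsn *; lia.
Qed.

Lemma dpi_le_geodesic_of_closest : dpi_le adj (sval Y) x y ((2 * window dl K + 5) * link_bound).
Proof.
set s := window dl K; set m := minn (w + s) n.
have Hx : dpi_le adj (sval Y) x (pt (xi 0)) link_bound.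
  exact: dpi_le_shadow (gamma_ne_apex (leq0n n)) (xi_shadow (leq0n n)).
have Hy : dpi_le adj (sval Y) (pt (xi n)) y link_bound.
  by apply: dpi_le_sym; rewrite -gamma_last; apply: dpi_le_shadow (gamma_ne_apex _) (xi_shadow _).
have Hmid := dpi_le_run (a := w - s) (d := m - (w - s)) ltac:(lia).
rewrite (_ : w - s + (m - (w - s)) = m) in Hmid; last by lia.
have Hxy := dpi_le_trans (dpi_le_trans (dpi_le_trans (dpi_le_trans Hx dpi_le_before_window) Hmid)
                                       dpi_le_after_window) Hy.
apply: diam_le_weaken Hxy _.
have : m - (w - s) <= 2 * s by lia.
by nia.
Qed.

End Closest.

Lemma dpi_le_geodesic_of_shadows : dpi_le adj (sval Y) x y ((2 * window dl K + 5) * link_bound).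
Proof.
have [w [k0 [Hw Hk0 Hmin]]] := closest_index.
exact: dpi_le_geodesic_of_closest Hk0 Hmin.
Qed.

End Shadows.

Lemma dpi_le_geodesic_avoiding_apex : dpi_le adj (sval Y) x y ((2 * window dl K + 5) * link_bound).
Proof.
case: (classic (exists y0, sval Y y0)) => [Yne|Yempty]; last first.
  by move=> a b [|] /proj_hat_in Ya; case: Yempty; exists a.
case: (posnP n) => [n0|npos].
  have -> : y = x by rewrite -gamma_last n0.
  have x_ne : x <> apex := gamma_ne_apex (leq0n n).
  apply: diam_le_weaken (dpi_le_linked x_ne x_ne (fun a b => shadows_linked x_ne)) _.
  by apply: leq_pmull; lia.
have [xi Hxi] : exists xi : nat -> V, forall i, i <= n -> shadow (gamma i) (xi i).
  have [y0 _] := Yne.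
  apply: (ClassicalEpsilon.choice (fun i z => i <= n -> shadow (gamma i) z)) => i.
  case: (leqP i n) => Hi; last by exists y0 => Hin; exfalso; lia.
  by have [z Hz] := gamma_has_shadow npos Hi; exists z.
exact: dpi_le_geodesic_of_shadows Hxi Yne.
Qed.

End AvoidingGeodesic.

End ConeOff.

Theorem lemma2p13 :
  exists a b : nat -> nat -> nat,
    (forall delta K, 0 < a delta K /\ 0 < b delta K) /\
    forall (V : Type) (adj : V -> V -> Prop) (delta K M0 : nat)
           (Ycol : (V -> Prop) -> Prop),
      (forall u v, adj u v -> adj v u) ->
      (forall v, ~ adj v v) ->
      connected adj ->
      hyperbolic adj delta ->
      (forall Y, Ycol Y -> quasiconvex adj K Y) ->
      geometrically_separated adj delta K M0 Ycol ->
      forall (Y : coll Ycol) (x y : cone_vertex Ycol) (g : seq (cone_vertex Ycol)),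
        x <> inr Y -> y <> inr Y ->
        geodesic (cone_adj adj (Ycol := Ycol)) x g y ->
        ~ on_path (inr Y) x g ->
        dpi_le adj (sval Y) x y (a delta K * M0 + b delta K).
Proof.
exists (fun dl K => 2 * window dl K + 5),
       (fun dl K => (2 * window dl K + 5) * (2 * K + proj_gap dl K)).
split=> [dl K | V adj dl K M0 Ycol adj_sym _ conn hyp qc sep Y x y g _ _ hg hav].
  by rewrite muln_gt0 /proj_gap; split; lia.
rewrite -mulnDr.
exact: (dpi_le_geodesic_avoiding_apex adj_sym conn hyp qc sep hg hav).
Qed.
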